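(* Let $(G,\prec)$ be a POP-graph with input edges $i_1\prec i_2\prec\cdots\prec i_m$ and output edges $o_1\prec\cdots\prec o_n$. (1) For $e\in E(G)\setminus I(G)$ and $1\le k\le m$: $e\in P_k$ if and only if $i^+(e)=i_k$. (2) For $e\in E(G)\setminus O(G)$ and $1\le k\le n$: $e\in Q_k$ if and only if $o^-(e)=o_k$.
   Context: A progressive graph is a finite directed acyclic graph (parallel edges allowed) in which every source and every sink has degree one; degree-one vertices are boundary vertices. $I(G)$ is the set of input edges (initial vertex a boundary vertex), $O(G)$ the set of output edges (terminal vertex a boundary vertex). For edges write $e\to e'$ if $e\neq e'$ and there is a directed path whose first edge is $e$ and last edge is $e'$. A planar order on $G$ is a linear order $\prec$ on $E(G)$ such that (P1) $e_1\to e_2$ implies $e_1\prec e_2$; (P2) if $e_1\prec e_2\prec e_3$ and $e_1\to e_3$ then $e_1\to e_2$ or $e_2\to e_3$. A POP-graph is a progressive graph with a planar order. $i^+(e)$ is the $\prec$-maximum of $\{i\in I(G): i\to e\}$ and $o^-(e)$ the $\prec$-minimum of $\{o\in O(G): e\to o\}$. Intervals: $P_k=\{e: i_k\prec e\prec i_{k+1}\}$ for $1\le k\le m-1$, $P_m=\{e: i_m\prec e\}$; $Q_1=\{e: e\prec o_1\}$, $Q_k=\{e: o_{k-1}\prec e\prec o_k\}$ for $2\le k\le n$. *)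

From mathcomp Require Import all_boot.
Set Implicit Arguments. Unset Strict Implicit. Unset Printing Implicit Defensive.

Section POP.
Variables (V E : finType) (src tgt : E -> V).

Definition adj : rel E := fun a b => tgt a == src b.

Definition reach (e e' : E) : Prop :=
  e <> e' /\ exists s : seq E, path adj e s /\ last e s = e'.

Definition acyclic : Prop :=
  forall (e : E) (s : seq E), path adj e s -> tgt (last e s) <> src e.

Definition indeg (v : V) : nat := #|[set e | tgt e == v]|.
Definition outdeg (v : V) : nat := #|[set e | src e == v]|.
Definition deg (v : V) : nat := indeg v + outdeg v.

Definition is_source (v : V) : bool := indeg v == 0.
Definition is_sink (v : V) : bool := outdeg v == 0.
Definition boundary (v : V) : bool := deg v == 1.

Definition progressive : Prop :=
  acyclic /\ (forall v, is_source v -> boundary v)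
          /\ (forall v, is_sink v -> boundary v).

Definition is_input (e : E) : bool := boundary (src e).
Definition is_output (e : E) : bool := boundary (tgt e).

Definition linear_order (lt : rel E) : Prop :=
  (forall x, ~~ lt x x) /\
  (forall x y z, lt x y -> lt y z -> lt x z) /\
  (forall x y, x != y -> lt x y || lt y x).

Definition planar_order (lt : rel E) : Prop :=
  linear_order lt /\
  (forall e1 e2, reach e1 e2 -> lt e1 e2) /\
  (forall e1 e2 e3, lt e1 e2 -> lt e2 e3 -> reach e1 e3 ->
      reach e1 e2 \/ reach e2 e3).

Definition enumerates (P : pred E) (lt : rel E) (m : nat) (f : nat -> E) : Prop :=
  (forall k, 1 <= k <= m -> P (f k)) /\
  (forall k l, 1 <= k -> k < l -> l <= m -> lt (f k) (f l)) /\
  (forall e, P e -> exists2 k, 1 <= k <= m & e = f k).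

Definition is_iplus (lt : rel E) (e i : E) : Prop :=
  is_input i /\ reach i e /\
  (forall j, is_input j -> reach j e -> j = i \/ lt j i).

Definition is_ominus (lt : rel E) (e o : E) : Prop :=
  is_output o /\ reach e o /\
  (forall j, is_output j -> reach e j -> j = o \/ lt o j).

Definition inP (lt : rel E) (m : nat) (inp : nat -> E) (k : nat) (e : E) : bool :=
  if k < m then lt (inp k) e && lt e (inp k.+1) else lt (inp k) e.

Definition inQ (lt : rel E) (out : nat -> E) (k : nat) (e : E) : bool :=
  if k == 1 then lt e (out 1) else lt (out k.-1) e && lt e (out k).

End POP.

(* Proof idea: nothing reaches an input edge, and walking backwards along incoming edges
   (which decrease in the planar order) shows that every other edge e is reached from some
   input.  Axiom (P2) then identifies i^+(e) with the last input preceding e: if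
   i^+(e) < j < e for an input j, then (P2) gives j -> e, since i^+(e) -> j is impossible.
   Being the last input before e is exactly what membership of e in P_k says of i_k.
   Part (2) is part (1) for the converse order and converse reachability, the outputs
   being enumerated backwards. *)

From Pilot Require Import Defs.
From mathcomp Require Import all_boot zify.
Set Implicit Arguments. Unset Strict Implicit. Unset Printing Implicit Defensive.

Definition converse (T : Type) (r : rel T) : rel T := fun x y => r y x.

Section LinearOrder.
Variables (T : finType) (lt : rel T).
Hypothesis lt_linear : linear_order lt.

Lemma lt_irr x : lt x x = false.
Proof. by case: lt_linear => irr _; apply/negbTE/irr. Qed.

Lemma lt_trans y x z : lt x y -> lt y z -> lt x z.
Proof. by case: lt_linear => _ [tr _]; apply: tr. Qed.

Lemma lt_total x y : x != y -> lt x y || lt y x.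
Proof. by case: lt_linear => _ [_ tot]; apply: tot. Qed.

Lemma lt_asym x y : lt x y -> lt y x = false.
Proof. by move=> lt_xy; apply/negbTE/negP => /(lt_trans lt_xy); rewrite lt_irr. Qed.

Lemma linear_order_converse : linear_order (converse lt).
Proof.
split=> [x|]; first by rewrite /converse lt_irr.
split=> [x y z lt_yx lt_zy | x y neq_xy]; first exact: lt_trans lt_zy lt_yx.
by rewrite /converse orbC lt_total.
Qed.

Definition rank (x : T) : nat := #|[pred y | lt y x]|.

Lemma rank_lt x y : lt x y -> rank x < rank y.
Proof.
move=> lt_xy; apply: proper_card; apply/properP; split.
  by apply/subsetP=> z; rewrite !inE => /lt_trans; apply.
by exists x; rewrite !inE ?lt_xy ?lt_irr.
Qed.

Variable I : pred T.

Definition last_before (e i : T) : Prop :=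
  I i /\ lt i e /\ (forall j, I j -> lt j e -> j = i \/ lt j i).

Lemma inP_last_before m f e k : enumerates I lt m f -> ~~ I e -> 1 <= k <= m ->
  inP lt m f k e <-> last_before e (f k).
Proof.
move=> [f_I [f_incr f_onto]] nIe km; rewrite /inP.
split=> [Pk | [_ [lt_fk_e last_fk]]].
- have lt_fk_e : lt (f k) e by case: ifP Pk => _ // /andP[].
  split; [exact: f_I | split=> // j Ij lt_je].
  have [l lm j_fl] := f_onto j Ij; subst j.
  case: (ltngtP l k) => [lt_lk | lt_kl | ->]; [by right; apply: f_incr; lia | | by left].
  have lt_e_fk1 : lt e (f k.+1) by move: Pk; rewrite ifT; [case/andP | lia].
  have lt_e_fl : lt e (f l).
    case: (eqVneq l k.+1) => [-> // | ne_lk1].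
    by apply: lt_trans lt_e_fk1 _; apply: f_incr; lia.
  by rewrite (lt_asym lt_e_fl) in lt_je.
- case: ifPn => // k_lt_m; rewrite lt_fk_e /=.
  have ne_fk1_e : f k.+1 != e by apply: contraNneq nIe => <-; apply: f_I; lia.
  case/orP: (lt_total ne_fk1_e) => // lt_fk1_e.
  have lt_fk_fk1 : lt (f k) (f k.+1) by apply: f_incr; lia.
  case: (last_fk _ (f_I k.+1 _) lt_fk1_e) => [|eq | lt_fk1_fk]; first lia.
    by rewrite eq lt_irr in lt_fk_fk1.
  by rewrite (lt_asym lt_fk_fk1) in lt_fk1_fk.
Qed.

End LinearOrder.

Lemma enumerates_converse (T : finType) (I : pred T) lt n f :
  enumerates I lt n f -> enumerates I (converse lt) n (fun k => f (n.+1 - k)).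
Proof.
move=> [f_I [f_incr f_onto]]; split=> [k kn | ]; first by apply: f_I; lia.
split=> [k l k1 kl ln | e Ie]; first by apply: f_incr; lia.
have [k kn ->] := f_onto e Ie; exists (n.+1 - k); first lia.
by rewrite subKn //; lia.
Qed.

Lemma inQ_converse (T : finType) (lt : rel T) n f k e : 1 <= k <= n ->
  inQ lt f k e = inP (converse lt) n (fun k => f (n.+1 - k)) (n.+1 - k) e.
Proof.
move=> kn; rewrite /inQ /inP /converse subKn; last lia.
case: eqP => [-> | k_ne1]; first by rewrite ifF //; lia.
rewrite ifT; last lia.
by rewrite andbC (_ : n.+1 - (n.+1 - k).+1 = k.-1) //; lia.
Qed.

Lemma inQ_first_after (T : finType) (lt : rel T) (I : pred T) n f e k :
  linear_order lt -> enumerates I lt n f -> ~~ I e -> 1 <= k <= n ->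
  inQ lt f k e <-> last_before (converse lt) I e (f k).
Proof.
move=> lt_linear f_enum nIe kn; rewrite (inQ_converse lt f e kn).
have := inP_last_before (linear_order_converse lt_linear) (enumerates_converse f_enum) nIe
  (k := n.+1 - k).
by rewrite /= subKn; [apply; lia | lia].
Qed.

Section Reaching.
Variables (T : finType) (lt : rel T) (R : T -> T -> Prop) (I : pred T).
Hypothesis lt_linear : linear_order lt.
Hypothesis R_lt : forall x y, R x y -> lt x y.
Hypothesis R_trans : forall x y z, R x y -> R y z -> R x z.
Hypothesis R_convex : forall x y z, lt x y -> lt y z -> R x z -> R x y \/ R y z.
Hypothesis I_unreached : forall x j, I j -> ~ R x j.
Hypothesis R_pred : forall j, ~~ I j -> exists x, R x j.

Definition last_reaching (e i : T) : Prop :=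
  I i /\ R i e /\ (forall j, I j -> R j e -> j = i \/ lt j i).

Lemma reached_from_source e : ~~ I e -> exists2 i, I i & R i e.
Proof.
have [n] := ubnP (rank lt e); elim: n e => // n IH e /ltnSE le_en nIe.
have [x R_xe] := R_pred nIe.
have [Ix | nIx] := boolP (I x); first by exists x.
have [|i Ii R_ix] := IH x _ nIx; first exact: leq_trans (rank_lt lt_linear (R_lt R_xe)) le_en.
by exists i; last exact: R_trans R_ix R_xe.
Qed.

Lemma last_reaching_iff_before e i : ~~ I e -> last_reaching e i <-> last_before lt I e i.
Proof.
move=> nIe; split=> [[Ii [R_ie last_i]] | [Ii [lt_ie last_i]]].
- split=> //; split=> [|j Ij lt_je]; first exact: R_lt.
  have [-> | ne_ji] := eqVneq j i; first by left.
  case/orP: (lt_total lt_linear ne_ji) => [lt_ji | lt_ij]; first by right.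
  by case: (R_convex lt_ij lt_je R_ie) => [/(I_unreached Ij) | /(last_i j Ij)].
- split=> //; split=> [|j Ij R_je]; last exact: last_i j Ij (R_lt R_je).
  have [i0 Ii0 R_i0e] := reached_from_source nIe.
  case: (last_i i0 Ii0 (R_lt R_i0e)) => [<- // | lt_i0i].
  by case: (R_convex lt_i0i lt_ie R_i0e) => // /(I_unreached Ii).
Qed.

End Reaching.

Lemma convex_converse (T : finType) (lt : rel T) (R : T -> T -> Prop) :
  (forall x y z, lt x y -> lt y z -> R x z -> R x y \/ R y z) ->
  forall x y z, converse lt x y -> converse lt y z -> R z x -> R y x \/ R z y.
Proof. by move=> R_convex x y z lt_yx lt_zy /(R_convex _ _ _ lt_zy lt_yx) []; [right | left]. Qed.

Section Graph.
Variables (V E : finType) (src tgt : E -> V).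
Local Notation adj := (adj src tgt).
Local Notation reach := (reach src tgt).
Local Notation is_input := (is_input src tgt).
Local Notation is_output := (is_output src tgt).

Lemma adj_not_input y j : adj y j -> ~~ is_input j.
Proof.
move=> adj_yj; rewrite /Defs.is_input /boundary /deg.
have : 0 < indeg tgt (src j) by apply/card_gt0P; exists y; rewrite inE.
have : 0 < outdeg src (src j) by apply/card_gt0P; exists j; rewrite inE.
lia.
Qed.

Lemma adj_not_output j y : adj j y -> ~~ is_output j.
Proof.
move=> adj_jy; rewrite /Defs.is_output /boundary /deg.
have : 0 < indeg tgt (tgt j) by apply/card_gt0P; exists j; rewrite inE.
have : 0 < outdeg src (tgt j) by apply/card_gt0P; exists y; rewrite inE eq_sym.
lia.
Qed.

Lemma reach_last_adj x y : reach x y -> exists z, adj z y.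
Proof.
case=> ne_xy [s []]; case/lastP: s => [_ /esym // | s z].
by rewrite rcons_path last_rcons => /andP[_ adj_z] <-; exists (last x s).
Qed.

Lemma reach_first_adj x y : reach x y -> exists z, adj x z.
Proof.
case=> ne_xy [[| z s] [/= p_zs last_s]]; first by case: ne_xy.
by case/andP: p_zs => adj_xz _; exists z.
Qed.

Lemma input_unreached x j : is_input j -> ~ reach x j.
Proof. by move=> Ij /reach_last_adj[z /adj_not_input]; rewrite Ij. Qed.

Lemma output_unreaching x j : is_output j -> ~ reach j x.
Proof. by move=> Oj /reach_first_adj[z /adj_not_output]; rewrite Oj. Qed.

Lemma reach_trans lt : planar_order src tgt lt ->
  forall x y z, reach x y -> reach y z -> reach x z.
Proof.
move=> [lin [reach_lt _]] x y z R_xy R_yz.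
split.
  move=> eq_xz; have := lt_trans lin (reach_lt _ _ R_xy) (reach_lt _ _ R_yz).
  by rewrite eq_xz lt_irr.
case: R_xy R_yz => _ [s [p_s <-]] [_ [t [p_t <-]]].
by exists (s ++ t); rewrite cat_path last_cat p_s.
Qed.

Hypothesis prog : progressive src tgt.

Lemma adj_reach x y : adj x y -> reach x y.
Proof.
case: prog => acyc _ adj_xy; split; last by exists [:: y]; rewrite /= adj_xy.
by move=> eq_xy; rewrite eq_xy in adj_xy; apply: (acyc y [::]) => //; apply/eqP.
Qed.

Lemma not_input_reached j : ~~ is_input j -> exists x, reach x j.
Proof.
case: prog => _ [src_bnd _] nIj.
have /card_gt0P[y] : 0 < indeg tgt (src j).
  by rewrite lt0n; apply: contraNN nIj => /src_bnd.
by rewrite inE => adj_yj; exists y; apply: adj_reach.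
Qed.

Lemma not_output_reaching j : ~~ is_output j -> exists x, reach j x.
Proof.
case: prog => _ [_ tgt_bnd] nOj.
have /card_gt0P[y] : 0 < outdeg src (tgt j).
  by rewrite lt0n; apply: contraNN nOj => /tgt_bnd.
by rewrite inE eq_sym => adj_jy; exists y; apply: adj_reach.
Qed.

End Graph.

Theorem lemma3p3 (V E : finType) (src tgt : E -> V) (lt : rel E)
  (m n : nat) (inp out : nat -> E) :
  progressive src tgt ->
  planar_order src tgt lt ->
  enumerates (is_input src tgt) lt m inp ->
  enumerates (is_output src tgt) lt n out ->
  (forall (e : E) (k : nat), ~~ is_input src tgt e -> 1 <= k <= m ->
      (inP lt m inp k e <-> is_iplus src tgt lt e (inp k))) /\
  (forall (e : E) (k : nat), ~~ is_output src tgt e -> 1 <= k <= n ->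
      (inQ lt out k e <-> is_ominus src tgt lt e (out k))).
Proof.
move=> prog planar inp_enum out_enum.
have [lin [reach_lt convex]] := planar.
have reach_tr := reach_trans planar.
split=> e k nIe k_bound.
- apply: iff_trans (inP_last_before lin inp_enum nIe k_bound) (iff_sym _).
  exact: (last_reaching_iff_before lin reach_lt reach_tr convex
           (@input_unreached _ _ src tgt) (not_input_reached prog)).
- apply: iff_trans (inQ_first_after lin out_enum nIe k_bound) (iff_sym _).
  exact: (last_reaching_iff_before (R := fun x y => reach src tgt y x)
           (linear_order_converse lin) (fun x y => reach_lt y x)
           (fun x y z R_yx R_zy => reach_tr z y x R_zy R_yx) (convex_converse convex)
           (@output_unreaching _ _ src tgt) (not_output_reaching prog)).
Qed.
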